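(* Let $k=\mathbb{F}_3$, let $O_7(k)$ be the group of $7\times7$ matrices over $k$ orthogonal for the bilinear form $\langle x,y\rangle=x_1y_7+x_2y_6+\dots+x_7y_1$ on $k^7$, and let \[ A=\begin{pmatrix} 0&0&1&0&0&1&0\\ 1&0&0&0&0&0&1\\ 0&1&0&0&0&0&0\\ 0&0&0&0&0&0&0\\ 0&1&0&0&0&0&1\\ 0&0&1&0&1&0&0\\ 0&0&0&0&0&1&0 \end{pmatrix}. \] Then there exists $g\in O_7(k)$ such that $M=g^{-1}Ag$ satisfies $M_{ij}=0$ for all $(i,j)\in\{(3,1),(4,1),(5,1),(6,1),(6,2),(7,1),(7,2),(7,3),(7,4),(7,5)\}$. Even more, there exists $g\in O_7(k)$ such that $M=g^{-1}Ag$ satisfies: $M_{ij}=0$ for all $(i,j)\in\{(3,1),(4,1),(4,2),(5,1),(6,1),(6,2),(6,4),(7,1),(7,2),(7,3),(7,4),(7,5)\}$, and $M_{21},M_{32},M_{52},M_{63},M_{65},M_{76}\in k^\times$ (all remaining entries arbitrary).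
   Context: $M_{ij}$ denotes the entry in row $i$ and column $j$. *)

From HB Require Import structures.
From mathcomp Require Import all_boot all_order all_algebra.
Set Implicit Arguments. Unset Strict Implicit. Unset Printing Implicit Defensive.
Import GRing.Theory.
Local Open Scope ring_scope.

Notation F3 := ('F_3 : finFieldType).

(* Gram matrix of <x,y> = x1 y7 + x2 y6 + ... + x7 y1 : antidiagonal identity *)
Definition Jform : 'M[F3]_7 :=
  \matrix_(i < 7, j < 7) (if (i + j == 6)%N then 1 else 0).

Definition orthogonal7 (g : 'M[F3]_7) : Prop := g^T *m Jform *m g = Jform.

(* 1-based entry M_{ij} (rows/cols numbered 1..7) *)
Definition entry (M : 'M[F3]_7) (i j : nat) : F3 := M (inord i.-1) (inord j.-1).

Definition A_rows : seq (seq nat) :=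
  [:: [:: 0; 0; 1; 0; 0; 1; 0];
      [:: 1; 0; 0; 0; 0; 0; 1];
      [:: 0; 1; 0; 0; 0; 0; 0];
      [:: 0; 0; 0; 0; 0; 0; 0];
      [:: 0; 1; 0; 0; 0; 0; 1];
      [:: 0; 0; 1; 0; 1; 0; 0];
      [:: 0; 0; 0; 0; 0; 1; 0]]%N.

Definition Amat : 'M[F3]_7 :=
  \matrix_(i < 7, j < 7) (nth 0%N (nth [::] A_rows i) j)%:R.

Definition zeros1 : seq (nat * nat) :=
  [:: (3,1); (4,1); (5,1); (6,1); (6,2); (7,1); (7,2); (7,3); (7,4); (7,5)]%N.
Definition zeros2 : seq (nat * nat) :=
  [:: (3,1); (4,1); (4,2); (5,1); (6,1); (6,2); (6,4); (7,1); (7,2); (7,3); (7,4); (7,5)]%N.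
Definition units2 : seq (nat * nat) :=
  [:: (2,1); (3,2); (5,2); (6,3); (6,5); (7,6)]%N.

(* One explicit orthogonal g works for both parts, since zeros1 is contained
   in zeros2. Checking it requires no inverse: g^T J g = J with J invertible
   forces g to be invertible, so g^-1 A g = M follows from A g = g M. *)

From mathcomp Require Import all_boot all_algebra zify.
Import GRing.Theory.
Local Open Scope ring_scope.

Lemma orthogonal_unitmx (R : comUnitRingType) n (J g : 'M[R]_n) :
  J \in unitmx -> g^T *m J *m g = J -> g \in unitmx.
Proof.
rewrite !unitmxE => unitJ /(congr1 determinant).
rewrite !det_mulmx det_tr => detJ.
by move: unitJ; rewrite -{1}detJ unitrM => /andP[].
Qed.

Lemma conjmx_eq (R : comUnitRingType) n (g A M : 'M[R]_n) :
  g \in unitmx -> A *m g = g *m M -> invmx g *m A *m g = M.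
Proof. by move=> unitg AgM; rewrite -mulmxA AgM mulmxA mulVmx ?mul1mx. Qed.

Definition mx_of_rows (rows : seq (seq nat)) : 'M[F3]_7 :=
  \matrix_(i < 7, j < 7) (nth 0%N (nth [::] rows i) j)%:R.

Definition gmat : 'M[F3]_7 := mx_of_rows
  [:: [:: 1; 1; 2; 0; 1; 0; 1];
      [:: 0; 1; 2; 1; 1; 2; 0];
      [:: 0; 0; 0; 0; 2; 2; 0];
      [:: 0; 0; 0; 1; 0; 2; 1];
      [:: 0; 0; 2; 0; 0; 1; 0];
      [:: 0; 0; 0; 0; 0; 1; 2];
      [:: 0; 0; 0; 0; 0; 0; 1]]%N.

Definition Mmat : 'M[F3]_7 := mx_of_rows
  [:: [:: 2; 2; 1; 0; 1; 1; 2];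
      [:: 1; 1; 0; 0; 2; 0; 1];
      [:: 0; 2; 0; 2; 1; 2; 1];
      [:: 0; 0; 2; 0; 2; 0; 0];
      [:: 0; 2; 2; 2; 0; 0; 1];
      [:: 0; 0; 2; 0; 2; 1; 2];
      [:: 0; 0; 0; 0; 0; 1; 2]]%N.

(* Matrices and big operators are locked, so each entry is first unfolded
   into an explicit sum of products of F_3 constants. *)
Ltac mx_compute :=
  apply/matrixP; intros i j;
  rewrite ?(mxE, big_ord_recr, big_ord0);
  destruct i as [[|[|[|[|[|[|[|i]]]]]]] lti]; try discriminate lti;
  destruct j as [[|[|[|[|[|[|[|j]]]]]]] ltj]; try discriminate ltj;
  apply/eqP; vm_compute; reflexivity.

Lemma Jform_mulmx n (B : 'M[F3]_(7, n)) :
  Jform *m B = \matrix_(i, j) B (rev_ord i) j.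
Proof.
apply/matrixP => i j; rewrite !mxE (bigD1 (rev_ord i)) //= mxE.
have -> : (i + (7 - i.+1) == 6)%N by apply/eqP; case: i => /= i; lia.
rewrite mul1r big1 ?addr0 // => k /eqP k_rev.
rewrite mxE; case: eqP => [ik | _]; last by rewrite mul0r.
by case: k_rev; apply: val_inj => /=; lia.
Qed.

Lemma Jform_mulmx_Jform : Jform *m Jform = 1%:M.
Proof.
apply/matrixP => i j; rewrite Jform_mulmx !mxE.
have -> : (7 - i.+1 + j == 6)%N = (i == j).
  by rewrite -val_eqE; case: i j => [i ?] [j ?] /=; apply/eqP/eqP; lia.
by case: (i == j).
Qed.

Lemma Jform_unitmx : Jform \in unitmx.
Proof. by case: (mulmx1_unit Jform_mulmx_Jform). Qed.

Lemma orthogonal7_gmat : orthogonal7 gmat.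
Proof.
rewrite /orthogonal7 -mulmxA Jform_mulmx /Jform /gmat /mx_of_rows.
mx_compute.
Qed.

Lemma Amat_gmat : Amat *m gmat = gmat *m Mmat.
Proof. rewrite /Amat /gmat /Mmat /mx_of_rows; mx_compute. Qed.

Lemma conj_gmat_Amat : invmx gmat *m Amat *m gmat = Mmat.
Proof.
apply: conjmx_eq Amat_gmat.
exact: orthogonal_unitmx Jform_unitmx orthogonal7_gmat.
Qed.

Lemma Mmat_zeros2 ij : ij \in zeros2 -> entry Mmat ij.1 ij.2 = 0.
Proof.
have /allP zero_at : all (fun ij => entry Mmat ij.1 ij.2 == 0) zeros2.
  by rewrite /= /entry /Mmat /mx_of_rows !mxE !inordK.
by move=> /zero_at /eqP.
Qed.

Lemma Mmat_units2 ij : ij \in units2 -> entry Mmat ij.1 ij.2 != 0.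
Proof.
have /allP unit_at : all (fun ij => entry Mmat ij.1 ij.2 != 0) units2.
  by rewrite /= /entry /Mmat /mx_of_rows !mxE !inordK.
exact: unit_at.
Qed.

Theorem lemma2p3 :
  (exists g : 'M[F3]_7, orthogonal7 g /\
     let M := invmx g *m Amat *m g in
     forall ij, ij \in zeros1 -> entry M ij.1 ij.2 = 0)
  /\
  (exists g : 'M[F3]_7, orthogonal7 g /\
     let M := invmx g *m Amat *m g in
     (forall ij, ij \in zeros2 -> entry M ij.1 ij.2 = 0) /\
     (forall ij, ij \in units2 -> entry M ij.1 ij.2 != 0)).
Proof.
have zeros1_sub : {subset zeros1 <= zeros2} by apply/allP.
split; exists gmat; split=> [|M]; try exact: orthogonal7_gmat;
  rewrite /M conj_gmat_Amat.
- by move=> ij /zeros1_sub; apply: Mmat_zeros2.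
- by split; [apply: Mmat_zeros2 | apply: Mmat_units2].
Qed.
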